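(* Let $S$ be a ring with $1$ and $R$ a subring of $S$ with $1\in R$. Suppose there is a unit $x\in S$ such that $x+1$ is also a unit and $x^{-1}Rx=(x+1)^{-1}R(x+1)=R$. Then either $(x+1)^{-1}\in R$, or $I_{x+1}:=R\cap(x+1)R$ is an ideal of $R$ with $I_{x+1}\neq R$ and $x^{-1}ux-u\in I_{x+1}$ for all $u\in R$. *)

From mathcomp Require Import all_boot all_algebra.
Set Implicit Arguments. Unset Strict Implicit. Unset Printing Implicit Defensive.
Import GRing.Theory.
Local Open Scope ring_scope.

Definition is_inverse (S : pzRingType) (u ui : S) : Prop :=
  u * ui = 1 /\ ui * u = 1.

Definition conj_stable (S : pzRingType) (R : {pred S}) (u ui : S) : Prop :=
  forall s : S, (exists2 r, r \in R & s = ui * r * u) <-> s \in R.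

Definition Iset (S : pzRingType) (R : {pred S}) (a : S) : S -> Prop :=
  fun s => s \in R /\ exists2 r, r \in R & s = a * r.

Definition is_ideal_of (S : pzRingType) (R : {pred S}) (I : S -> Prop) : Prop :=
  [/\ forall s, I s -> s \in R,
      I 0,
      forall a b, I a -> I b -> I (a - b),
      forall r a, r \in R -> I a -> I (r * a)
    & forall r a, r \in R -> I a -> I (a * r)].

From HB Require Import structures.
From mathcomp Require Import all_boot all_algebra.
Set Implicit Arguments. Unset Strict Implicit. Unset Printing Implicit Defensive.
Import GRing.Theory.
Local Open Scope ring_scope.

(* Write $y = x + 1$.  $R \cap yR$ is closed under left multiplication by $R$
   because $r y = y (y^{-1} r y)$ and $y$ normalises $R$; it contains $1$ only
   if $y^{-1} \in R$.  The ring identity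
   $x^{-1} u x - u = y\,(x^{-1} u x - y^{-1} u y)$
   puts $x^{-1} u x - u$ in $yR$, and it lies in $R$ since $x$ normalises $R$. *)

Lemma conj_stable_mem (S : pzRingType) (R : {pred S}) (u ui r : S) :
  conj_stable R u ui -> r \in R -> ui * r * u \in R.
Proof. by move=> hc Hr; apply/hc; exists r. Qed.

Lemma conj_subr_eq (S : pzRingType) (x xi yi u : S) :
  x * xi = 1 -> (x + 1) * yi = 1 ->
  xi * u * x - u = (x + 1) * (xi * u * x - yi * u * (x + 1)).
Proof.
move=> xxi yyi; rewrite mulrBr !mulrA yyi [(x + 1) * xi]mulrDl mul1r xxi.
by rewrite !mulrDl !mul1r mulrDr mulr1 opprD addrA [u * x + _]addrC addrK.
Qed.

Section IdealOfUnit.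

Variables (S : pzRingType) (R : {pred S}).
Hypothesis hR : subring_closed R.

HB.instance Definition _ := GRing.isSubringClosed.Build S R hR.

Lemma Iset_ideal (a ai : S) :
  a * ai = 1 -> {in R, forall r, ai * r * a \in R} ->
  is_ideal_of R (Iset R a).
Proof.
move=> aai conjR; split.
- by move=> s [].
- by split; [exact: rpred0 | exists 0; rewrite ?rpred0 ?mulr0].
- move=> s t [Rs [rs Rrs Es]] [Rt [rt Rrt Et]].
  by split; [exact: rpredB | exists (rs - rt); rewrite ?rpredB // Es Et mulrBr].
- move=> r s Rr [Rs [rs Rrs Es]]; split; first exact: rpredM.
  exists (ai * r * a * rs); first by rewrite rpredM ?conjR.
  by rewrite Es !mulrA aai mul1r.
- move=> r s Rr [Rs [rs Rrs Es]]; split; first exact: rpredM.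
  by exists (rs * r); rewrite ?rpredM // Es mulrA.
Qed.

Lemma Iset_full_inv_mem (a ai : S) :
  ai * a = 1 -> (forall s, Iset R a s <-> s \in R) -> ai \in R.
Proof.
move=> aia full; have [_ [r Rr ar1]] := proj2 (full 1) (rpred1 _).
by rewrite -[ai]mulr1 ar1 mulrA aia mul1r.
Qed.

Lemma conj_subr_Iset (x xi yi u : S) :
  x * xi = 1 -> (x + 1) * yi = 1 ->
  conj_stable R x xi -> conj_stable R (x + 1) yi -> u \in R ->
  Iset R (x + 1) (xi * u * x - u).
Proof.
move=> xxi yyi hcx hcy Ru; have Rxu := conj_stable_mem hcx Ru.
split; first exact: rpredB.
exists (xi * u * x - yi * u * (x + 1)); last exact: conj_subr_eq.
by rewrite rpredB // (conj_stable_mem hcy).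
Qed.

End IdealOfUnit.

Theorem lemma2p4 (S : pzRingType) (R : {pred S}) (x xi yi : S)
  (hR : subring_closed R)
  (hx : is_inverse x xi) (hy : is_inverse (x + 1) yi)
  (hcx : conj_stable R x xi) (hcy : conj_stable R (x + 1) yi) :
  yi \in R \/
  (is_ideal_of R (Iset R (x + 1)) /\
   ~ (forall s, Iset R (x + 1) s <-> s \in R) /\
   (forall u, u \in R -> Iset R (x + 1) (xi * u * x - u))).
Proof.
have [[xxi _] [yyi yiy]] := (hx, hy).
case: (boolP (yi \in R)) => Ryi; [by left | right].
split; first by apply: (Iset_ideal hR yyi) => r; apply: conj_stable_mem.
split; first by move/(Iset_full_inv_mem hR yiy); apply/negP.
by move=> u /(conj_subr_Iset hR xxi yyi hcx hcy).
Qed.
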